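(* Let $V=\bigoplus_{i\in I}B_i$ be a near vector space over a commutative $F$ with $I$ finite, where the $B_i$ are the blocks of $V$. Then for every $\Delta\subseteq I$ the subset $\bigoplus_{i\in\Delta}B_i\subseteq V$ is definable by a quantifier-free formula (of $\mathcal L_{\bar F nvs}$).
   Context: A near vector space $(V,F)$: $(V,+)$ a group, $F$ a set of endomorphisms containing $0,1,-1$, with $F\setminus\{0\}$ a subgroup of $\mathrm{Aut}(V,+)$ acting fixed point freely ($\alpha x=\beta x\Rightarrow\alpha=\beta$ or $x=0$), such that the quasi-kernel $Q(V)=\{u:\forall\alpha,\beta\in F\,\exists\gamma\in F\ \alpha u+\beta u=\gamma u\}$ generates $V$. Commutative: $\alpha(\beta v)=\beta(\alpha v)$. The blocks of $V$ are the summands in André's decomposition of $V$ into maximal regular near vector subspaces (regular: any two nonzero quasi-kernel elements $u,v$ satisfy $u+\lambda v\in Q(V)$ for some $\lambda\neq0$), each nonzero element of $Q(V)$ lying in exactly one block. $\bar F$ is the set of formal finite sums $\alpha_1+_\cdot\cdots+_\cdot\alpha_n$ of elements of $F$ acting by $v\mapsto\alpha_1(v)+\cdots+\alpha_n(v)$. $\mathcal L_{\bar Fnvs}=\{+,0,(\lambda)_{\lambda\in\bar F}\}$, with each unary function symbol interpreted as the corresponding action; each such function is quantifier-free definable from $\mathcal L_{Fnvs}=\{+,0,(\lambda)_{\lambda\in F}\}$. *)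

From HB Require Import structures.
From mathcomp Require Import all_boot all_order all_algebra.
From Stdlib Require List.
Set Implicit Arguments. Unset Strict Implicit. Unset Printing Implicit Defensive.
Import GRing.Theory.
Local Open Scope ring_scope.

(* The additive group (V,+) is taken to be a zmodType (abelian): this is
   forced by the axioms, since v |-> -v lies in F\{0} <= Aut(V,+).
   F is a set of maps V -> V (a predicate on functions). *)

Section NVS.
Variable V : zmodType.
Variable F : (V -> V) -> Prop.

Definition zero_map : V -> V := fun _ => 0.

Definition nvs_scalars : Prop :=
  [/\ F zero_map, F id, F (fun v => - v),
      (forall a, F a -> forall x y, a (x + y) = a x + a y)
    & (forall a b x, F a -> F b -> a x = b x -> a = b \/ x = 0)] /\
  [/\ (forall a, F a -> a <> zero_map -> bijective a),
      (forall a b, F a -> F b -> a <> zero_map -> b <> zero_map ->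
         F (a \o b))
    & (forall a, F a -> a <> zero_map ->
         exists2 b, F b & cancel a b /\ cancel b a)].

Definition subgroup (W : V -> Prop) : Prop :=
  [/\ W 0, (forall x y, W x -> W y -> W (x + y)) & (forall x, W x -> W (- x))].

Definition generates (S W : V -> Prop) : Prop :=
  (forall x, S x -> W x) /\
  (forall H : V -> Prop, subgroup H -> (forall x, S x -> H x) ->
     forall x, W x -> H x).

Definition quasi_kernel (W : V -> Prop) (u : V) : Prop :=
  W u /\ forall a b, F a -> F b -> exists2 c, F c & a u + b u = c u.

Definition fullset : V -> Prop := fun _ => True.

Definition near_vector_space : Prop :=
  nvs_scalars /\ generates (quasi_kernel fullset) fullset.

Definition commutative_scalars : Prop :=
  forall a b, F a -> F b -> forall v, a (b v) = b (a v).

Definition nv_subspace (W : V -> Prop) : Prop :=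
  [/\ subgroup W, (forall a w, F a -> W w -> W (a w))
    & generates (quasi_kernel W) W].

Definition regular (W : V -> Prop) : Prop :=
  forall u v, quasi_kernel W u -> quasi_kernel W v -> u <> 0 -> v <> 0 ->
    exists l, [/\ F l, l <> zero_map & quasi_kernel W (u + l v)].

Definition max_regular_subspace (W : V -> Prop) : Prop :=
  [/\ nv_subspace W, regular W &
      forall W', nv_subspace W' -> regular W' ->
        (forall x, W x -> W' x) -> forall x, W' x -> W x].

Definition internal_direct_sum (I : finType) (B : I -> V -> Prop) : Prop :=
  (forall v, exists b : I -> V, (forall i, B i (b i)) /\ v = \sum_i b i) /\
  (forall b b' : I -> V, (forall i, B i (b i)) -> (forall i, B i (b' i)) ->
     \sum_i b i = \sum_i b' i -> forall i, b i = b' i).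

Definition block_decomposition (I : finType) (B : I -> V -> Prop) : Prop :=
  (forall i, max_regular_subspace (B i)) /\ internal_direct_sum B.

Definition sub_sum (I : finType) (B : I -> V -> Prop) (D : {set I}) (v : V)
  : Prop :=
  exists b : I -> V, [/\ forall i, B i (b i),
                        forall i, i \notin D -> b i = 0 & v = \sum_(i in D) b i].

(* Language L_{bar F nvs}: terms in the single variable x, built from 0, +
   and unary symbols lambda in bar F (formal finite sums of elements of F,
   represented by a list of elements of F). *)
Inductive term : Type :=
  | TVar : term
  | TZero : term
  | TAdd : term -> term -> term
  | TAct : seq (V -> V) -> term -> term.

Inductive qf_formula : Type :=
  | QTrue : qf_formula
  | QEq : term -> term -> qf_formula
  | QNot : qf_formula -> qf_formula
  | QAnd : qf_formula -> qf_formula -> qf_formula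
  | QOr : qf_formula -> qf_formula -> qf_formula.

Fixpoint term_wf (t : term) : Prop :=
  match t with
  | TVar | TZero => True
  | TAdd t1 t2 => term_wf t1 /\ term_wf t2
  | TAct l t1 => (forall a, List.In a l -> F a) /\ term_wf t1
  end.

Fixpoint formula_wf (f : qf_formula) : Prop :=
  match f with
  | QTrue => True
  | QEq t1 t2 => term_wf t1 /\ term_wf t2
  | QNot g => formula_wf g
  | QAnd g h | QOr g h => formula_wf g /\ formula_wf h
  end.

Definition barF_act (l : seq (V -> V)) (v : V) : V := \sum_(a <- l) a v.

Fixpoint term_eval (t : term) (x : V) : V :=
  match t with
  | TVar => x
  | TZero => 0
  | TAdd t1 t2 => term_eval t1 x + term_eval t2 x
  | TAct l t1 => barF_act l (term_eval t1 x)
  end.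

Fixpoint formula_holds (f : qf_formula) (x : V) : Prop :=
  match f with
  | QTrue => True
  | QEq t1 t2 => term_eval t1 x = term_eval t2 x
  | QNot g => ~ formula_holds g x
  | QAnd g h => formula_holds g x /\ formula_holds h x
  | QOr g h => formula_holds g x \/ formula_holds h x
  end.

Definition qf_definable (S : V -> Prop) : Prop :=
  exists f : qf_formula, formula_wf f /\ forall x, formula_holds f x <-> S x.

End NVS.

From mathcomp Require Import all_boot all_order all_algebra.
From Stdlib Require Import Classical FunctionalExtensionality.
Set Implicit Arguments. Unset Strict Implicit. Unset Printing Implicit Defensive.
Import GRing.Theory.
Local Open Scope ring_scope.

(** In a regular near vector space (F commutative) the scalar [γ] with
    [α u + β u = γ u] does not depend on the nonzero vector [u]. Two distinct
    blocks B_i, B_j cannot share this "addition table" of F, since otherwise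
    B_i + B_j would be a larger regular subspace; so some [α, β, γ] satisfy
    [α v + β v = γ v] on all of B_i but on no nonzero vector of B_j. The
    term [α x + β x + (-γ) x] therefore kills B_i and is injective on B_j, and
    composing such terms over all i ≠ j yields a term [t_j] with
    [t_j x = 0] iff the j-th coordinate of x vanishes. The sum of the blocks
    in Δ is then defined by the conjunction of [t_j x = 0] over j ∉ Δ. *)

Section Scalars.
Variable V : zmodType.
Variable F : (V -> V) -> Prop.
Hypothesis HS : nvs_scalars F.

Lemma scalar_additive a : F a -> {morph a : x y / x + y}.
Proof. by case: HS => -[_ _ _ H _] _; apply: H. Qed.

Lemma scalar0 a : F a -> a 0 = 0.
Proof.
by move=> Fa; apply: (addrI (a 0)); rewrite -scalar_additive // !addr0.
Qed.

Lemma scalarN a : F a -> {morph a : x / - x}.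
Proof.
by move=> Fa x; apply/eqP; rewrite -addr_eq0 -scalar_additive // addNr scalar0.
Qed.

Lemma sum_scalarD a b g x y : F a -> F b -> F g ->
  a x + b x = g x -> a y + b y = g y -> a (x + y) + b (x + y) = g (x + y).
Proof.
move=> Fa Fb Fg ex ey.
by rewrite !(scalar_additive Fa, scalar_additive Fb, scalar_additive Fg) addrACA ex ey.
Qed.

Lemma scalar_fpf a b x : F a -> F b -> a x = b x -> a = b \/ x = 0.
Proof. by case: HS => -[_ _ _ _ H] _; apply: H. Qed.

Lemma scalar_id : F id.
Proof. by case: HS => -[]. Qed.

Lemma scalar_zero : F (@zero_map V).
Proof. by case: HS => -[]. Qed.

Lemma scalar_opp : F (fun v => - v).
Proof. by case: HS => -[]. Qed.

Lemma scalar_inv a : F a -> a <> @zero_map V ->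
  exists2 b, F b & cancel a b /\ cancel b a.
Proof. by case: HS => _ [_ _ H]; apply: H. Qed.

Lemma scalar_oppf k : F k -> F (fun x => - k x).
Proof.
move=> Fk; have [k0|nk] := classic (k = @zero_map V).
  have -> : (fun x => - k x) = @zero_map V.
    by apply: functional_extensionality => x; rewrite k0 /zero_map oppr0.
  exact: scalar_zero.
have [opp0|nopp] := classic ((fun v : V => - v) = @zero_map V).
  have -> : (fun x => - k x) = @zero_map V.
    by apply: functional_extensionality => x; apply: (congr1 (@^~ (k x)) opp0).
  exact: scalar_zero.
by case: HS => _ [_ H _]; apply: (H _ _ scalar_opp Fk nopp nk).
Qed.

End Scalars.

Section RegularSubspace.
Variable V : zmodType.
Variable F : (V -> V) -> Prop.
Hypothesis HS : nvs_scalars F.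
Hypothesis Hcomm : commutative_scalars F.
Variable W : V -> Prop.
Hypothesis nW : nv_subspace F W.

Lemma quasi_kernel_scale l v : F l -> quasi_kernel F W v ->
  quasi_kernel F W (l v).
Proof.
case: nW => _ WF _ Fl [Wv Hv]; split; first exact: WF.
move=> a b Fa Fb; have [g Fg e] := Hv a b Fa Fb; exists g => //.
by rewrite (Hcomm Fa Fl) (Hcomm Fb Fl) -(scalar_additive HS) // e (Hcomm Fg Fl).
Qed.

Hypothesis rW : regular F W.

Lemma sum_scalar_uniform u v a b g h :
  quasi_kernel F W u -> quasi_kernel F W v -> u <> 0 -> v <> 0 ->
  F a -> F b -> F g -> F h -> a u + b u = g u -> a v + b v = h v -> g = h.
Proof.
move=> Qu Qv nu nv Fa Fb Fg Fh eu ev.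
have [l [Fl nl Qw]] := rW Qu Qv nu nv.
set v' := l v.
have nv' : v' <> 0.
  by move=> e; case: (scalar_fpf HS Fl (scalar_zero HS) (x := v) e).
have ev' : a v' + b v' = h v'.
  by rewrite /v' (Hcomm Fa Fl) (Hcomm Fb Fl) -(scalar_additive HS) // ev (Hcomm Fh Fl).
have [_ Qv'] : quasi_kernel F W v' by exact: quasi_kernel_scale.
have [k Fk ew] := Qw.2 a b Fa Fb.
(* compare the action of [a + b] at [u], [v'] and [u + v'] *)
have E : g u - k u = k v' - h v'.
  move: ew.
  rewrite !(scalar_additive HS Fa, scalar_additive HS Fb, scalar_additive HS Fk).
  rewrite addrACA eu ev' => H.
  by rewrite -[g u](addrK (h v')) H addrAC [k u + k v']addrC addrK.
have [e1|ne1] := classic (g u = k u).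
  case: (scalar_fpf HS Fg Fk e1) => // egk; subst k.
  move: E; rewrite subrr => /eqP; rewrite eq_sym subr_eq0 => /eqP e2.
  by case: (scalar_fpf HS Fg Fh e2).
(* otherwise [u] is a scalar multiple of [v'], on which [a + b] acts as [h] *)
have [c Fc ec] := Qu.2 g _ Fg (scalar_oppf HS Fk).
have [d Fd ed] := Qv' k _ Fk (scalar_oppf HS Fh).
have nc : c <> @zero_map V.
  by move=> c0; apply: ne1; apply/eqP; rewrite -subr_eq0 ec c0.
have [c' Fc' [cK _]] := scalar_inv HS Fc nc.
have eu' : u = c' (d v') by rewrite -ed -E ec cK.
have : a u + b u = h u.
  rewrite eu' !(Hcomm Fa Fc') !(Hcomm Fb Fc') -(scalar_additive HS) // (Hcomm Fa Fd).
  by rewrite (Hcomm Fb Fd) -(scalar_additive HS) // ev' (Hcomm Fd Fh) (Hcomm Fc' Fh).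
by rewrite eu => /(scalar_fpf HS Fg Fh); case.
Qed.

Lemma regular_quasi_kernel x : W x -> quasi_kernel F W x.
Proof.
have [[W0 WD WN] _ [_ Gen]] := nW.
apply: (Gen (quasi_kernel F W)) => // {x}; split.
- split=> // a b Fa Fb; exists id; first exact: scalar_id HS.
  by rewrite (scalar0 HS Fa) (scalar0 HS Fb) addr0.
- move=> x y Qx Qy; split; first exact: WD Qx.1 Qy.1.
  move=> a b Fa Fb.
  have [g Fg ex] := Qx.2 a b Fa Fb; have [h Fh ey] := Qy.2 a b Fa Fb.
  have [-> | nx] := classic (x = 0); first by rewrite add0r; exists h.
  have [-> | ny] := classic (y = 0); first by rewrite addr0; exists g.
  have gh := sum_scalar_uniform Qx Qy nx ny Fa Fb Fg Fh ex ey; subst h.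
  by exists g => //; apply: (sum_scalarD HS).
- move=> x [Wx Hx]; split; first exact: WN.
  move=> a b Fa Fb; have [g Fg ex] := Hx a b Fa Fb; exists g => //.
  by rewrite (scalarN HS Fa) (scalarN HS Fb) (scalarN HS Fg) -opprD ex.
Qed.

Lemma regular_sum_scalar y a b g : W y -> y <> 0 -> F a -> F b -> F g ->
  a y + b y = g y -> forall w, W w -> a w + b w = g w.
Proof.
move=> Wy ny Fa Fb Fg ey w Ww.
have [-> | nw] := classic (w = 0).
  by rewrite (scalar0 HS Fa) (scalar0 HS Fb) (scalar0 HS Fg) addr0.
have Qw := regular_quasi_kernel Ww.
have [h Fh ew] := Qw.2 a b Fa Fb.
by rewrite (sum_scalar_uniform (regular_quasi_kernel Wy) Qw ny nw Fa Fb Fg Fh ey ew).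
Qed.

End RegularSubspace.

Section SubspaceSum.
Variable V : zmodType.
Variable F : (V -> V) -> Prop.
Hypothesis HS : nvs_scalars F.
Hypothesis Hcomm : commutative_scalars F.
Variables W1 W2 : V -> Prop.
Hypothesis nW1 : nv_subspace F W1.
Hypothesis nW2 : nv_subspace F W2.

Definition subset_add (x : V) : Prop :=
  exists y z, [/\ W1 y, W2 z & x = y + z].

Definition same_sum_scalars : Prop :=
  forall a b g h y z, F a -> F b -> F g -> F h -> W1 y -> W2 z ->
    y <> 0 -> z <> 0 -> a y + b y = g y -> a z + b z = h z -> g = h.

Lemma subset_addl x : W1 x -> subset_add x.
Proof. by case: nW2 => -[W20 _ _] _ _ Wx; exists x, 0; rewrite addr0. Qed.

Lemma subset_addr x : W2 x -> subset_add x.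
Proof. by case: nW1 => -[W10 _ _] _ _ Wx; exists 0, x; rewrite add0r. Qed.

Lemma subgroup_subset_add : subgroup subset_add.
Proof.
have [[W10 W1D W1N] _ _] := nW1; have [[W20 W2D W2N] _ _] := nW2.
split; first exact: subset_addl.
- move=> _ _ [y [z [Wy Wz ->]]] [y' [z' [Wy' Wz' ->]]].
  by exists (y + y'), (z + z'); rewrite addrACA; split; [apply: W1D|apply: W2D|].
- move=> _ [y [z [Wy Wz ->]]]; exists (- y), (- z).
  by rewrite opprD; split; [apply: W1N|apply: W2N|].
Qed.

Lemma nv_subspace_add : nv_subspace F subset_add.
Proof.
have [_ W1F [_ Gen1]] := nW1; have [_ W2F [_ Gen2]] := nW2.
split; first exact: subgroup_subset_add.
- move=> a _ Fa [y [z [Wy Wz ->]]]; exists (a y), (a z).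
  by rewrite (scalar_additive HS Fa); split; [apply: W1F|apply: W2F|].
split; first by move=> x [].
move=> H sgH QH _ [y [z [Wy Wz ->]]]; case: (sgH) => _ HD _; apply: HD.
- by apply: (Gen1 H) => // u [Wu Qu]; apply: QH; split=> //; apply: subset_addl.
- by apply: (Gen2 H) => // u [Wu Qu]; apply: QH; split=> //; apply: subset_addr.
Qed.

Hypothesis rW1 : regular F W1.
Hypothesis rW2 : regular F W2.

Lemma regular_add : same_sum_scalars -> regular F subset_add.
Proof.
move=> same.
have Q x : subset_add x -> quasi_kernel F subset_add x.
  move=> Wx; split=> // a b Fa Fb; case: Wx => y [z [Wy Wz ->]].
  have [g Fg ey] := (regular_quasi_kernel HS Hcomm nW1 rW1 Wy).2 a b Fa Fb.
  have [h Fh ez] := (regular_quasi_kernel HS Hcomm nW2 rW2 Wz).2 a b Fa Fb.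
  have [-> | ny] := classic (y = 0); first by rewrite add0r; exists h.
  have [-> | nz] := classic (z = 0); first by rewrite addr0; exists g.
  have gh := same a b g h y z Fa Fb Fg Fh Wy Wz ny nz ey ez; subst h.
  by exists g => //; apply: (sum_scalarD HS).
move=> u v [Wu _] [Wv _] nu _; exists id; split.
- exact: scalar_id HS.
- by move=> e; apply: nu; apply: (congr1 (@^~ u) e).
- by case: subgroup_subset_add => _ WD _; apply/Q/WD.
Qed.

End SubspaceSum.

Section Terms.
Variable V : zmodType.
Variable F : (V -> V) -> Prop.
Hypothesis HS : nvs_scalars F.

Lemma barF_act_additive l : (forall a, List.In a l -> F a) ->
  {morph barF_act l : x y / x + y}.
Proof.
rewrite /barF_act; elim: l => [|a l IH] Fl x y; first by rewrite !big_nil addr0.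
have Fa : F a by apply: Fl; left.
rewrite !big_cons IH => [|b lb]; last by apply: Fl; right.
by rewrite (scalar_additive HS Fa) addrACA.
Qed.

Lemma barF_act_closed W l x : nv_subspace F W ->
  (forall a, List.In a l -> F a) -> W x -> W (barF_act l x).
Proof.
case=> -[W0 WD _] WF _; rewrite /barF_act; elim: l => [|a l IH] Fl Wx.
  by rewrite big_nil.
rewrite big_cons; apply: WD; first by apply: WF => //; apply: Fl; left.
by apply: IH => // b lb; apply: Fl; right.
Qed.

Lemma term_eval_additive t : term_wf F t -> {morph term_eval t : x y / x + y}.
Proof.
elim: t => [| |t1 IH1 t2 IH2|l t IH] //= wf x y; first by rewrite addr0.
  by case: wf => wf1 wf2; rewrite IH1 // IH2 // addrACA.
by case: wf => Fl wf; rewrite IH // barF_act_additive.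
Qed.

Lemma term_eval0 t : term_wf F t -> term_eval t 0 = 0.
Proof.
by move=> wf; apply: (addrI (term_eval t 0)); rewrite -term_eval_additive ?addr0.
Qed.

Lemma term_eval_closed W t x : nv_subspace F W -> term_wf F t ->
  W x -> W (term_eval t x).
Proof.
move=> nW; have [[W0 WD _] _ _] := nW.
elim: t => [| |t1 IH1 t2 IH2|l t IH] //= wf Wx.
  by case: wf => wf1 wf2; apply: WD; [apply: IH1|apply: IH2].
by case: wf => Fl wf; apply: barF_act_closed => //; apply: IH.
Qed.

Lemma qf_definable_ext (S S' : V -> Prop) :
  (forall x, S x <-> S' x) -> qf_definable F S -> qf_definable F S'.
Proof.
by move=> SS' [f [wf Hf]]; exists f; split=> // x; rewrite Hf.
Qed.

Lemma qf_definable_all (J : eqType) (s : seq J) (S : J -> V -> Prop) :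
  (forall j, qf_definable F (S j)) ->
  qf_definable F (fun x => forall j, j \in s -> S j x).
Proof.
move=> defS; elim: s => [|j s [f [wf Hf]]]; first by exists (QTrue V).
have [g [wg Hg]] := defS j.
exists (QAnd g f); split=> // x /=; rewrite Hf Hg; split.
  by case=> Sj Ss k; rewrite inE => /orP [/eqP -> | /Ss].
by move=> H; split=> [|k ks]; apply: H; rewrite inE ?eqxx ?ks ?orbT.
Qed.

End Terms.

Section Blocks.
Variable V : zmodType.
Variable F : (V -> V) -> Prop.
Hypothesis HS : nvs_scalars F.
Hypothesis Hcomm : commutative_scalars F.
Variable I : finType.
Variable B : I -> V -> Prop.
Hypothesis Hmax : forall i, max_regular_subspace F (B i).
Hypothesis Hdir : internal_direct_sum B.

Lemma block_nv i : nv_subspace F (B i).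
Proof. by case: (Hmax i). Qed.

Lemma block_regular i : regular F (B i).
Proof. by case: (Hmax i). Qed.
Arguments block_regular : clear implicits.

Lemma block0 i : B i 0.
Proof. by case: (block_nv i) => -[]. Qed.

Lemma blocks_disjoint i j x : i != j -> B i x -> B j x -> x = 0.
Proof.
move=> nij Bix Bjx.
pose b k := if k == i then x else 0; pose b' k := if k == j then x else 0.
have Bb k : B k (b k) by rewrite /b; case: eqP => [->|_] //; apply: block0.
have Bb' k : B k (b' k) by rewrite /b'; case: eqP => [->|_] //; apply: block0.
have sum_single k (c : I -> V) : (forall l, l != k -> c l = 0) ->
    \sum_l c l = c k.
  by move=> c0; rewrite (bigD1 k) //= big1 ?addr0.
have sb : \sum_l b l = x.
  by rewrite (sum_single i) /b ?eqxx // => l /negbTE ->.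
have sb' : \sum_l b' l = x.
  by rewrite (sum_single j) /b' ?eqxx // => l /negbTE ->.
have := Hdir.2 b b' Bb Bb'; rewrite sb sb' => /(_ erefl i).
by rewrite /b /b' eqxx (negbTE nij).
Qed.

(* otherwise B i + B j is regular, hence equal to B i by maximality *)
Lemma blocks_not_same_sum_scalars i j z : i != j -> B j z -> z <> 0 ->
  ~ same_sum_scalars F (B i) (B j).
Proof.
move=> nij Bz nz same; apply: nz; apply: (blocks_disjoint nij) => //.
have [_ _ maxi] := Hmax i.
have nv := nv_subspace_add HS (block_nv i) (block_nv j).
have reg := regular_add HS Hcomm (block_nv i) (block_nv j) (block_regular i)
  (block_regular j) same.
exact: maxi _ nv reg (subset_addl (block_nv j)) z (subset_addr (block_nv i) Bz).
Qed.

Lemma block_separating_scalars i j z : i != j -> B j z -> z <> 0 ->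
  exists a b g, [/\ F a, F b, F g,
    forall w, B i w -> a w + b w = g w &
    forall w, B j w -> a w + b w = g w -> w = 0].
Proof.
move=> nij Bz nz; apply: NNPP => nsep.
apply: (blocks_not_same_sum_scalars nij Bz nz).
move=> a b g h y y' Fa Fb Fg Fh By By' ny ny' ey ey'; apply: NNPP => ngh.
apply: nsep; exists a, b, g; split=> // [w Bw|w Bw ew].
  exact: (regular_sum_scalar HS Hcomm (block_nv i) (block_regular i) By ny
    Fa Fb Fg ey).
have := regular_sum_scalar HS Hcomm (block_nv j) (block_regular j) By' ny'
  Fa Fb Fh ey' Bw.
by rewrite ew => /(scalar_fpf HS Fg Fh); case.
Qed.

Lemma block_annihilator j z : B j z -> z <> 0 ->
  exists2 t, term_wf F t &
    (forall i, i != j -> forall v, B i v -> term_eval t v = 0) /\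
    (forall v, B j v -> term_eval t v = 0 -> v = 0).
Proof.
move=> Bz nz.
suff annih : forall s : seq I, exists2 t, term_wf F t &
    (forall i, i \in s -> i != j -> forall v, B i v -> term_eval t v = 0) /\
    (forall v, B j v -> term_eval t v = 0 -> v = 0).
  have [t wt [kill inj]] := annih (enum I).
  by exists t => //; split=> // i; apply: kill; rewrite mem_enum.
elim=> [|i s [t wt [kill inj]]]; first by exists (TVar V).
have [ij | nij] := eqVneq i j.
  exists t => //; split=> // k; rewrite inE => /orP [/eqP ->|]; last exact: kill.
  by rewrite ij eqxx.
have [a [b [g [Fa Fb Fg ab_g ab_g_inj]]]] := block_separating_scalars nij Bz nz.
have wl : forall c, List.In c [:: a; b; fun x => - g x] -> F c.
  by move=> c [<-|[<-|[<-|[]]]] //; apply: scalar_oppf.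
have evalE v : term_eval (TAct [:: a; b; fun x => - g x] t) v =
    a (term_eval t v) + b (term_eval t v) - g (term_eval t v).
  by rewrite /= /barF_act !big_cons big_nil addr0 addrA.
exists (TAct [:: a; b; fun x => - g x] t) => //; split.
  move=> k; rewrite inE => /orP [/eqP -> _ v Bv|ks nkj v Bv].
    by rewrite evalE ab_g ?subrr //; apply: term_eval_closed (block_nv i) wt Bv.
  rewrite evalE (kill k) //.
  by rewrite (scalar0 HS Fa) (scalar0 HS Fb) (scalar0 HS Fg) subr0 addr0.
move=> v Bv; rewrite evalE => /eqP; rewrite subr_eq0 => /eqP ev.
by apply/inj/ab_g_inj => //; apply: term_eval_closed (block_nv j) wt Bv.
Qed.

Definition coord_zero j (x : V) : Prop :=
  forall b, (forall i, B i (b i)) -> x = \sum_i b i -> b j = 0.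

Lemma term_eval_coord t j b : term_wf F t -> (forall i, B i (b i)) ->
  (forall i, i != j -> term_eval t (b i) = 0) ->
  term_eval t (\sum_i b i) = term_eval t (b j).
Proof.
move=> wt Bb kill.
rewrite (big_morph _ (term_eval_additive HS wt) (term_eval0 HS wt)).
by rewrite (bigD1 j) //= big1 ?addr0.
Qed.

Lemma coord_zero_definable j : qf_definable F (coord_zero j).
Proof.
have [[z [Bz nz]] | triv] := classic (exists z, B j z /\ z <> 0); last first.
  exists (QTrue V); split=> // x; split=> // _ b Bb _.
  by apply: NNPP => nb; apply: triv; exists (b j).
have [t wt [kill inj]] := block_annihilator Bz nz.
exists (QEq t (TZero V)); split=> // x /=; split=> [ex b Bb xE | zx].
  have coordE : term_eval t x = term_eval t (b j).
    rewrite xE (term_eval_coord (j := j) wt Bb) // => i nij.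
    exact: kill i nij _ (Bb i).
  by apply: inj; [apply: Bb | rewrite -coordE].
have [b [Bb xE]] := Hdir.1 x.
rewrite xE (term_eval_coord (j := j) wt Bb) => [|i nij].
  by rewrite (zx b Bb xE) (term_eval0 HS wt).
exact: kill i nij _ (Bb i).
Qed.

Lemma sub_sumE D x : sub_sum B D x <-> forall j, j \notin D -> coord_zero j x.
Proof.
have sum_in (b : I -> V) : (forall i, i \notin D -> b i = 0) ->
    \sum_i b i = \sum_(i in D) b i.
  by move=> b0; rewrite (bigID (mem D)) /= [X in _ + X]big1 ?addr0.
split=> [[b [Bb b0 ->]] j jD b' Bb' xE | zx].
  by rewrite -(Hdir.2 b b' Bb Bb' _ j) ?b0 // -xE sum_in.
have [b [Bb xE]] := Hdir.1 x.
have b0 i : i \notin D -> b i = 0 by move=> iD; apply: zx.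
by exists b; split=> //; rewrite xE sum_in.
Qed.

End Blocks.

Theorem mainTheorem15 (V : zmodType) (F : (V -> V) -> Prop)
  (I : finType) (B : I -> V -> Prop) :
  near_vector_space F -> commutative_scalars F ->
  block_decomposition F B ->
  forall D : {set I}, qf_definable F (sub_sum B D).
Proof.
move=> [HS _] Hcomm [Hmax Hdir] D.
apply: (qf_definable_ext (S := fun x => forall j, j \in enum (~: D) ->
  coord_zero B j x)).
  move=> x; rewrite sub_sumE //.
  by split=> H j jD; apply: H; move: jD; rewrite ?mem_enum in_setC.
apply: qf_definable_all => j.
exact: coord_zero_definable.
Qed.
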